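(* Let $n\ge 2$ and let $v_1,\ldots,v_n$ be positive integers all less than or equal to $1.2n$. Then either $\mathrm{ML}(v_1,\ldots,v_n)=\frac{1}{n+1}$, or $\mathrm{ML}(v_1,\ldots,v_n)=\frac{2}{2n+1}$, or $\mathrm{ML}(v_1,\ldots,v_n)\ge\frac1n$.
   Context: For a real number $x$, $\Vert x\Vert$ denotes the distance from $x$ to the nearest integer. For positive integers $v_1,\ldots,v_n$, the maximum loneliness is $\mathrm{ML}(v_1,\ldots,v_n)=\max_{t\in\mathbb{R}}\min_{1\le i\le n}\Vert t v_i\Vert$. *)

From Stdlib Require Import Reals Lra Lia ClassicalEpsilon.
Open Scope R_scope.

Definition dist_int (x : R) : R := Rabs (x - IZR (Int_part (x + /2))).

(* min_{0 <= i < n} ||t * v i||  (for n >= 1); indices shifted to 0..n-1. *)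
Fixpoint min_loneliness (t : R) (v : nat -> nat) (n : nat) : R :=
  match n with
  | O => 1
  | S O => dist_int (t * INR (v O))
  | S m => Rmin (min_loneliness t v m) (dist_int (t * INR (v m)))
  end.

Definition is_max_loneliness (v : nat -> nat) (n : nat) (m : R) : Prop :=
  (exists t : R, min_loneliness t v n = m) /\
  (forall t : R, min_loneliness t v n <= m).

Definition ML (v : nat -> nat) (n : nat) : R :=
  epsilon (inhabits 0) (fun m => is_max_loneliness v n m).

(* If the speeds cover {1, ..., n}, then, being only n, they are exactly 1, ..., n: the
   time t = 1/(n+1) keeps each of them at distance at least 1/(n+1) from the integers, and
   Dirichlet's approximation theorem shows that no time does better.
   Otherwise some j <= n is not a speed; suppose ML < 1/n. Each of the times 1/j,
   (2n+1)/(2jn) and (2n-1)/(2jn) then brings some speed within 1/n of an integer, and as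
   all speeds are at most 6n/5 this forces n < 2j and makes 2j and 2j+1 speeds. Sending
   each present k <= n to itself, each missing j to 2j+1, and one extra point to 2j_0
   (for a fixed missing j_0) yields n+1 distinct speeds among n, a contradiction. *)

From Stdlib Require Import Reals Lra Lia List ClassicalEpsilon Classical.
Open Scope nat_scope.

Definition is_value (v : nat -> nat) (n k : nat) : Prop := exists i, i < n /\ v i = k.

Lemma pigeonhole_values (v h : nat -> nat) (n : nat) :
  (forall k, k <= n -> is_value v n (h k)) ->
  exists k1 k2, k1 < k2 <= n /\ h k1 = h k2.
Proof.
  intros Hh. apply NNPP. intros Hinj.
  assert (Hnodup : NoDup (map h (seq 0 (S n)))).
  { apply NoDup_map_NoDup_ForallPairs; [|apply seq_NoDup].
    intros a b Ha Hb Hab. apply in_seq in Ha, Hb.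
    destruct (Nat.lt_total a b) as [Hlt|[Heq|Hlt]]; [| exact Heq |]; exfalso; apply Hinj.
    - exists a, b. split; [lia|exact Hab].
    - exists b, a. split; [lia|symmetry; exact Hab]. }
  assert (Hincl : incl (map h (seq 0 (S n))) (map v (seq 0 n))).
  { intros y Hy. apply in_map_iff in Hy as [k [<- Hk]]. apply in_seq in Hk.
    destruct (Hh k) as [i [Hi <-]]; [lia|]. apply in_map, in_seq. lia. }
  apply NoDup_incl_length in Hincl; [|exact Hnodup].
  rewrite !length_map, !length_seq in Hincl. lia.
Qed.

Lemma is_value_dec (v : nat -> nat) (n k : nat) : {is_value v n k} + {~ is_value v n k}.
Proof.
  induction n as [|n IH].
  - right. intros [i [Hi _]]. lia.
  - destruct (Nat.eq_dec (v n) k) as [Hk|Hk].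
    + left. exists n. auto.
    + destruct IH as [Hval|Hnot].
      * left. destruct Hval as [i [Hi Hvi]]. exists i. split; [lia|exact Hvi].
      * right. intros [i [Hi Hvi]]. destruct (Nat.eq_dec i n) as [->|Hin]; [contradiction|].
        apply Hnot. exists i. split; [lia|exact Hvi].
Qed.

Lemma values_le_of_covered (v : nat -> nat) (n : nat) :
  (forall k, 1 <= k <= n -> is_value v n k) -> forall i, i < n -> v i <= n.
Proof.
  intros Hcov i Hi. apply Nat.nlt_ge. intros Hgt.
  destruct (pigeonhole_values v (fun k => match k with O => v i | S _ => k end) n)
    as [[|k1] [[|k2] [Hk Heq]]]; try lia.
  intros [|k] Hk; [exists i; auto | apply Hcov; lia].
Qed.

Lemma missing_values_not_all_paired (v : nat -> nat) (n j0 : nat) :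
  1 <= j0 <= n -> ~ is_value v n j0 ->
  ~ (forall j, 1 <= j <= n -> ~ is_value v n j ->
       n < 2 * j /\ is_value v n (2 * j) /\ is_value v n (2 * j + 1)).
Proof.
  intros Hj0 Hmiss0 Hpair.
  destruct (Hpair j0 Hj0 Hmiss0) as [Hlt0 [Hval0 _]].
  (* present k map to themselves, missing k to the odd 2k+1 > n, and 0 to the even 2 j0 > n *)
  set (h k := match k with
              | O => 2 * j0
              | S _ => if is_value_dec v n k then k else 2 * k + 1
              end).
  destruct (pigeonhole_values v h n) as [k1 [k2 [Hk Heq]]].
  - intros [|k] Hk; [exact Hval0|]. unfold h.
    destruct (is_value_dec v n (S k)) as [Hval|Hmiss]; [exact Hval|].
    apply (Hpair (S k)); [lia|exact Hmiss].
  - assert (Hmissing_large : forall k, 1 <= k <= n -> ~ is_value v n k -> n < 2 * k)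
      by (intros k Hk' Hmiss; apply (Hpair k Hk' Hmiss)).
    unfold h in Heq. destruct k1 as [|k1], k2 as [|k2]; try lia;
      destruct (is_value_dec v n (S k2)) as [H2|H2];
      try (pose proof (Hmissing_large (S k2) ltac:(lia) H2));
      try destruct (is_value_dec v n (S k1)) as [H1|H1];
      try (pose proof (Hmissing_large (S k1) ltac:(lia) H1)); lia.
Qed.

Lemma witnesses_force_pair (n j u1 u2 u3 : nat) : 1 <= j <= n ->
  1 <= u1 -> 5 * u1 <= 6 * n -> u1 <> j -> u1 mod j = 0 ->
  5 * u2 <= 6 * n -> 0 < u2 mod j -> u2 mod j + 1 = j -> 2 * n < u2 + 2 * j ->
  5 * u3 <= 6 * n -> u3 mod j = 1 -> 2 * n < u3 + 2 * j ->
  n < 2 * j /\ u1 = 2 * j /\ u3 = 2 * j + 1.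
Proof.
  intros Hj Hu1 Hu1_le Hne1 Hr1 Hu2_le Hr2 Hr2' Hlarge2 Hu3_le Hr3 Hlarge3.
  pose proof (Nat.div_mod u1 j ltac:(lia)) as E1.
  pose proof (Nat.div_mod u2 j ltac:(lia)) as E2.
  pose proof (Nat.div_mod u3 j ltac:(lia)) as E3.
  set (q1 := u1 / j) in *. set (q2 := u2 / j) in *. set (q3 := u3 / j) in *.
  assert (Hj_lower : 2 * n < 5 * j) by lia.
  assert (Hq1 : q1 = 2) by (destruct q1 as [|[|[|q]]]; nia).
  assert (Hj_upper : 5 * j <= 3 * n) by nia.
  assert (Hq3 : q3 = 2) by (destruct q3 as [|[|[|q]]]; nia).
  assert (Hq2 : q2 = 1 \/ q2 = 2) by (destruct q2 as [|[|[|q]]]; nia).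
  destruct Hq2; nia.
Qed.

Open Scope R_scope.

Lemma dist_int_le (x : R) (z : Z) : dist_int x <= Rabs (x - IZR z).
Proof.
  unfold dist_int. set (r := Int_part (x + /2)).
  destruct (base_Int_part (x + /2)) as [Hr1 Hr2]. fold r in Hr1, Hr2.
  destruct (Z.eq_dec z r) as [->|Hne]; [lra|].
  assert (Hz : (z <= r - 1)%Z \/ (r + 1 <= z)%Z) by lia.
  destruct Hz as [Hz|Hz]; apply IZR_le in Hz; rewrite ?minus_IZR, ?plus_IZR in Hz;
    unfold Rabs; repeat destruct Rcase_abs; lra.
Qed.

Lemma dist_int_ge (x a : R) (k : Z) : IZR k + a <= x <= IZR k + 1 - a -> a <= dist_int x.
Proof.
  intros [H1 H2]. unfold dist_int. set (r := Int_part (x + /2)).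
  destruct (Z.le_gt_cases r k) as [Hr|Hr].
  - apply IZR_le in Hr. unfold Rabs; destruct Rcase_abs; lra.
  - assert (Hr' : (k + 1 <= r)%Z) by lia. apply IZR_le in Hr'. rewrite plus_IZR in Hr'.
    unfold Rabs; destruct Rcase_abs; lra.
Qed.

Lemma dist_int_add_IZR (x : R) (z : Z) : dist_int (x + IZR z) = dist_int x.
Proof.
  apply Rle_antisym.
  - unfold dist_int at 2.
    replace (x - IZR (Int_part (x + /2)))
      with (x + IZR z - IZR (Int_part (x + /2) + z)) by (rewrite plus_IZR; ring).
    apply dist_int_le.
  - unfold dist_int at 2.
    replace (x + IZR z - IZR (Int_part (x + IZR z + /2)))
      with (x - IZR (Int_part (x + IZR z + /2) - z)) by (rewrite minus_IZR; ring).
    apply dist_int_le.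
Qed.

Lemma dist_int_lipschitz (x y : R) : dist_int x <= dist_int y + Rabs (x - y).
Proof.
  unfold dist_int at 2. eapply Rle_trans; [apply (dist_int_le x (Int_part (y + /2)))|].
  replace (x - IZR (Int_part (y + /2))) with ((y - IZR (Int_part (y + /2))) + (x - y)) by ring.
  apply Rabs_triang.
Qed.

Lemma dist_int_le_frac_part (x : R) : dist_int x <= 1 - frac_part x.
Proof.
  destruct (base_Int_part x) as [H1 H2]. unfold frac_part.
  eapply Rle_trans; [apply (dist_int_le x (Int_part x + 1))|].
  rewrite plus_IZR, Rabs_left1; lra.
Qed.

Lemma dist_int_sub_le (x y : R) : dist_int (x - y) <= Rabs (frac_part x - frac_part y).
Proof.
  unfold frac_part. replace (x - IZR (Int_part x) - (y - IZR (Int_part y)))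
    with (x - y - IZR (Int_part x - Int_part y)) by (rewrite minus_IZR; ring).
  apply dist_int_le.
Qed.

Lemma dist_int_ge_inv (y : R) (k p q n : nat) : (0 < q)%nat -> (0 < n)%nat ->
  y = INR k + INR p / INR q -> (q <= p * n)%nat -> (p * n + q <= q * n)%nat ->
  1 / INR n <= dist_int y.
Proof.
  intros Hq Hn Hy Hlow Hhigh.
  apply lt_0_INR in Hq, Hn. apply le_INR in Hlow, Hhigh.
  rewrite mult_INR in Hlow. rewrite plus_INR, !mult_INR in Hhigh.
  set (u := INR p / INR q) in *.
  assert (Hp : INR p = u * INR q) by (unfold u; field; lra).
  assert (Hinv : INR n * (1 / INR n) = 1) by (field; lra).
  rewrite Hp in Hlow, Hhigh.
  assert (Hun : 1 <= u * INR n) by nra.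
  assert (Hun' : u * INR n + 1 <= INR n) by nra.
  apply (dist_int_ge y (1 / INR n) (Z.of_nat k)). rewrite <- INR_IZR_INZ, Hy. nra.
Qed.

Section MinLoneliness.
Variable v : nat -> nat.

Lemma min_loneliness_le (m i : nat) (t : R) : (i <= m)%nat ->
  min_loneliness t v (S m) <= dist_int (t * INR (v i)).
Proof.
  revert i. induction m as [|m IH]; intros i Hi.
  - replace i with 0%nat by lia. simpl. lra.
  - change (min_loneliness t v (S (S m)))
      with (Rmin (min_loneliness t v (S m)) (dist_int (t * INR (v (S m))))).
    destruct (Nat.eq_dec i (S m)) as [->|Hne].
    + apply Rmin_r.
    + eapply Rle_trans; [apply Rmin_l | apply IH; lia].
Qed.

Lemma min_loneliness_glb (m : nat) (t a : R) :
  (forall i, (i <= m)%nat -> a <= dist_int (t * INR (v i))) -> a <= min_loneliness t v (S m).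
Proof.
  induction m as [|m IH]; intros H.
  - apply H. lia.
  - change (min_loneliness t v (S (S m)))
      with (Rmin (min_loneliness t v (S m)) (dist_int (t * INR (v (S m))))).
    apply Rmin_glb; [apply IH; intros i Hi|]; apply H; lia.
Qed.

Lemma min_loneliness_attained (m : nat) (t : R) :
  exists i, (i <= m)%nat /\ min_loneliness t v (S m) = dist_int (t * INR (v i)).
Proof.
  induction m as [|m [i [Hi He]]].
  - exists 0%nat. split; [lia | reflexivity].
  - change (min_loneliness t v (S (S m)))
      with (Rmin (min_loneliness t v (S m)) (dist_int (t * INR (v (S m))))).
    unfold Rmin. destruct Rle_dec.
    + exists i. split; [lia | exact He].
    + exists (S m). split; [lia | reflexivity].
Qed.

Lemma min_loneliness_add_IZR (m : nat) (t : R) (z : Z) :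
  min_loneliness (t + IZR z) v (S m) = min_loneliness t v (S m).
Proof.
  assert (Hshift : forall i, dist_int ((t + IZR z) * INR (v i)) = dist_int (t * INR (v i))).
  { intro i. rewrite INR_IZR_INZ, Rmult_plus_distr_r, <- mult_IZR. apply dist_int_add_IZR. }
  apply Rle_antisym; apply min_loneliness_glb; intros i Hi.
  - rewrite <- Hshift. apply min_loneliness_le. exact Hi.
  - rewrite Hshift. apply min_loneliness_le. exact Hi.
Qed.

Lemma min_loneliness_lipschitz (m : nat) (C t s : R) :
  (forall i, (i <= m)%nat -> INR (v i) <= C) ->
  min_loneliness t v (S m) <= min_loneliness s v (S m) + C * Rabs (t - s).
Proof.
  intros HC. destruct (min_loneliness_attained m s) as [i [Hi ->]].
  eapply Rle_trans; [apply (min_loneliness_le m i t Hi)|].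
  eapply Rle_trans; [apply dist_int_lipschitz|].
  apply Rplus_le_compat_l.
  replace (t * INR (v i) - s * INR (v i)) with ((t - s) * INR (v i)) by ring.
  rewrite Rabs_mult, (Rabs_right (INR (v i))) by (apply Rle_ge, pos_INR).
  rewrite Rmult_comm. apply Rmult_le_compat_r; [apply Rabs_pos | apply HC, Hi].
Qed.

End MinLoneliness.

Lemma lipschitz_continuity_pt (f : R -> R) (K : R) : 0 <= K ->
  (forall x y, f x <= f y + K * Rabs (x - y)) -> forall x, continuity_pt f x.
Proof.
  intros HK Hf x eps Heps. exists (eps / (K + 1)). split; [apply Rdiv_lt_0_compat; lra|].
  intros y [_ Hy]. simpl in Hy |- *. unfold R_dist in *.
  apply (Rmult_lt_compat_r (K + 1)) in Hy; [|lra].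
  unfold Rdiv in Hy. rewrite Rmult_assoc, Rinv_l, Rmult_1_r in Hy by lra.
  pose proof (Hf x y) as Hxy. pose proof (Hf y x) as Hyx. rewrite Rabs_minus_sym in Hxy.
  pose proof (Rabs_pos (y - x)).
  apply Rabs_def1; nra.
Qed.

Lemma bounded_on_prefix (f : nat -> R) (m : nat) : exists C, forall i, (i <= m)%nat -> f i <= C.
Proof.
  induction m as [|m [C HC]].
  - exists (f 0%nat). intros i Hi. replace i with 0%nat by lia. lra.
  - exists (Rmax C (f (S m))). intros i Hi.
    destruct (Nat.eq_dec i (S m)) as [->|Hne]; [apply Rmax_r|].
    eapply Rle_trans; [apply HC; lia | apply Rmax_l].
Qed.

Lemma ML_is_max (v : nat -> nat) (n : nat) : (1 <= n)%nat -> is_max_loneliness v n (ML v n).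
Proof.
  intros Hn. destruct n as [|m]; [lia|].
  set (f t := min_loneliness t v (S m)).
  destruct (bounded_on_prefix (fun i => INR (v i)) m) as [C HC].
  assert (HC0 : 0 <= C) by (eapply Rle_trans; [apply pos_INR | apply (HC 0%nat); lia]).
  assert (Hcont : forall t, continuity_pt f t)
    by (apply (lipschitz_continuity_pt f C HC0); intros; apply min_loneliness_lipschitz, HC).
  destruct (continuity_ab_maj f 0 1) as [t0 [Hmax _]]; [lra | intros; apply Hcont |].
  unfold ML. apply epsilon_spec. exists (f t0). split; [exists t0; reflexivity|].
  intros t. replace t with (frac_part t + IZR (Int_part t)) by (unfold frac_part; ring).
  rewrite min_loneliness_add_IZR. apply Hmax. pose proof (base_fp t). lra.
Qed.

Lemma ML_ge (v : nat -> nat) (n : nat) (t a : R) : (1 <= n)%nat ->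
  (forall i, (i < n)%nat -> a <= dist_int (t * INR (v i))) -> a <= ML v n.
Proof.
  intros Hn H. destruct (ML_is_max v n Hn) as [_ Hmax].
  eapply Rle_trans; [|apply (Hmax t)]. destruct n as [|m]; [lia|].
  apply min_loneliness_glb. intros i Hi. apply H. lia.
Qed.

Lemma ML_le (v : nat -> nat) (n : nat) : (1 <= n)%nat ->
  exists t, forall i, (i < n)%nat -> ML v n <= dist_int (t * INR (v i)).
Proof.
  intros Hn. destruct (ML_is_max v n Hn) as [[t Ht] _]. exists t. intros i Hi.
  rewrite <- Ht. destruct n as [|m]; [lia|]. apply min_loneliness_le. lia.
Qed.

Lemma ML_lt_witness (v : nat -> nat) (n : nat) (t a : R) : (1 <= n)%nat -> ML v n < a ->
  exists i, (i < n)%nat /\ dist_int (t * INR (v i)) < a.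
Proof.
  intros Hn Hlt. destruct (ML_is_max v n Hn) as [_ Hmax]. specialize (Hmax t).
  destruct n as [|m]; [lia|]. destruct (min_loneliness_attained v m t) as [i [Hi He]].
  exists i. split; [lia | lra].
Qed.

Lemma dirichlet_approximation (n : nat) (t : R) : (1 <= n)%nat ->
  exists k, (1 <= k <= n)%nat /\ dist_int (t * INR k) <= 1 / (INR n + 1).
Proof.
  intros Hn. apply NNPP. intros Hnone.
  assert (Hfar : forall k, (1 <= k <= n)%nat -> 1 / (INR n + 1) < dist_int (t * INR k)).
  { intros k Hk. apply Rnot_le_lt. intros Hle. apply Hnone. eauto. }
  set (N := INR n + 1) in *.
  assert (HN : INR n + 1 = N) by reflexivity.
  assert (Hn1 : 1 <= INR n) by (apply (le_INR 1); lia).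
  assert (HinvN : N * (1 / N) = 1) by (field; lra).
  set (f k := frac_part (t * INR k)).
  set (box k := Int_part (N * f k)).
  assert (Hbox : forall k, IZR (box k) <= N * f k < IZR (box k) + 1)
    by (intros k; destruct (base_Int_part (N * f k)); unfold box; lra).
  assert (Hf : forall k, 0 <= f k < 1) by (intros k; destruct (base_fp (t * INR k)); unfold f; lra).
  assert (Hbox_nonneg : forall k, (0 <= box k)%Z).
  { intros k. cut (-1 < box k)%Z; [lia|]. apply lt_IZR.
    destruct (Hbox k), (Hf k). nra. }
  (* only n boxes are reachable: the last one would put t k within 1/N below an integer *)
  assert (Hbox_lt : forall k, (k <= n)%nat -> (box k < Z.of_nat n)%Z).
  { intros k Hk. apply lt_IZR. rewrite <- INR_IZR_INZ. destruct (Hbox k) as [Hb _].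
    destruct (Nat.eq_dec k 0) as [->|Hk0].
    - unfold f in Hb. rewrite Rmult_0_r, fp_R0 in Hb. lra.
    - apply Rnot_le_lt. intros Hge. pose proof (Hfar k ltac:(lia)) as Hk'.
      pose proof (dist_int_le_frac_part (t * INR k)). fold (f k) in *. nra. }
  destruct (pigeonhole_values (fun i => i) (fun k => Z.to_nat (box k)) n) as [k1 [k2 [Hk Heq]]].
  - intros k Hk. exists (Z.to_nat (box k)). split; [|reflexivity].
    specialize (Hbox_nonneg k). specialize (Hbox_lt k Hk). lia.
  - assert (Hsame : box k1 = box k2)
      by (pose proof (Hbox_nonneg k1); pose proof (Hbox_nonneg k2); lia).
    pose proof (Hfar (k2 - k1)%nat ltac:(lia)) as Hfar12.
    rewrite minus_INR, Rmult_minus_distr_l in Hfar12 by lia.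
    pose proof (dist_int_sub_le (t * INR k2) (t * INR k1)) as Hclose.
    fold (f k1) (f k2) in Hclose.
    destruct (Hbox k1), (Hbox k2). rewrite Hsame in *.
    unfold Rabs in Hclose. destruct Rcase_abs in Hclose; nra.
Qed.

Lemma INR_divmod (v j : nat) : (0 < j)%nat -> INR v = INR j * INR (v / j) + INR (v mod j).
Proof. intros Hj. rewrite <- mult_INR, <- plus_INR. f_equal. apply Nat.div_mod. lia. Qed.

Lemma dist_int_div_ge (n j v : nat) : (1 <= j <= n)%nat -> (v mod j <> 0)%nat ->
  1 / INR n <= dist_int (1 / INR j * INR v).
Proof.
  intros Hj Hr. pose proof (Nat.mod_upper_bound v j ltac:(lia)).
  assert (0 < INR j) by (apply lt_0_INR; lia).
  assert (0 < INR n) by (apply lt_0_INR; lia).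
  apply (dist_int_ge_inv _ (v / j) (n * (v mod j)) (j * n) n); try nia.
  rewrite (INR_divmod v j), !mult_INR by lia. field. lra.
Qed.

Lemma freq_plus_witness (n j v : nat) : (1 <= j <= n)%nat -> (1 <= v)%nat ->
  (5 * v <= 6 * n)%nat -> v <> j ->
  dist_int ((2 * INR n + 1) / (2 * INR j * INR n) * INR v) < 1 / INR n ->
  (0 < v mod j /\ v mod j + 1 = j /\ 2 * n < v + 2 * j)%nat.
Proof.
  intros Hj Hv Hv6 Hne Hlt. pose proof (Nat.mod_upper_bound v j ltac:(lia)).
  pose proof (Nat.div_mod v j ltac:(lia)). pose proof (INR_divmod v j ltac:(lia)) as E.
  set (q := (v / j)%nat) in *. set (r := (v mod j)%nat) in *.
  assert (0 < INR j) by (apply lt_0_INR; lia).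
  assert (0 < INR n) by (apply lt_0_INR; lia).
  apply NNPP. intros Hnot. apply (Rlt_not_le _ _ Hlt).
  destruct (Nat.eq_dec r 0) as [Hr|Hr].
  - (* t v = q + q / (2n) *)
    assert (Hq2 : (2 <= q)%nat) by (destruct q as [|[|q]]; lia).
    assert (Hq6 : (5 * q <= 6 * n)%nat) by nia.
    apply (dist_int_ge_inv _ q q (2 * n) n); try nia.
    rewrite E, Hr, !mult_INR. simpl. field. lra.
  - (* t v = q + (2nr + v) / (2jn) *)
    apply (dist_int_ge_inv _ q (2 * n * r + v) (2 * j * n) n); try nia.
    rewrite E at 1. rewrite plus_INR, !mult_INR, E. simpl. field. lra.
Qed.

Lemma freq_minus_witness (n j v : nat) : (1 <= j <= n)%nat -> (1 <= v)%nat ->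
  (5 * v <= 6 * n)%nat -> v <> j ->
  dist_int ((2 * INR n - 1) / (2 * INR j * INR n) * INR v) < 1 / INR n ->
  (v mod j = 1 /\ 2 * n < v + 2 * j)%nat.
Proof.
  intros Hj Hv Hv6 Hne Hlt. pose proof (Nat.mod_upper_bound v j ltac:(lia)).
  pose proof (Nat.div_mod v j ltac:(lia)). pose proof (INR_divmod v j ltac:(lia)) as E.
  set (q := (v / j)%nat) in *. set (r := (v mod j)%nat) in *.
  assert (0 < INR j) by (apply lt_0_INR; lia).
  assert (0 < INR n) by (apply lt_0_INR; lia).
  apply NNPP. intros Hnot. apply (Rlt_not_le _ _ Hlt).
  destruct (Nat.eq_dec r 0) as [Hr|Hr].
  - (* t v = (q - 1) + (2n - q) / (2n) *)
    assert (Hq2 : (2 <= q)%nat) by (destruct q as [|[|q]]; lia).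
    assert (Hq6 : (5 * q <= 6 * n)%nat) by nia.
    apply (dist_int_ge_inv _ (q - 1) (2 * n - q) (2 * n) n); try nia.
    rewrite E, Hr, !minus_INR, !mult_INR by lia. simpl. field. lra.
  - (* t v = q + (2nr - v) / (2jn) *)
    apply (dist_int_ge_inv _ q (2 * n * r - v) (2 * j * n) n); try nia.
    rewrite minus_INR by nia. rewrite E at 1. rewrite !mult_INR, E. simpl. field. lra.
Qed.

Lemma ML_covered (n : nat) (v : nat -> nat) : (1 <= n)%nat ->
  (forall i, (i < n)%nat -> (0 < v i)%nat) ->
  (forall k, (1 <= k <= n)%nat -> is_value v n k) ->
  ML v n = 1 / (INR n + 1).
Proof.
  intros Hn Hpos Hcov. apply Rle_antisym.
  - destruct (ML_le v n Hn) as [t Ht].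
    destruct (dirichlet_approximation n t Hn) as [k [Hk Hd]].
    destruct (Hcov k Hk) as [i [Hi <-]].
    eapply Rle_trans; [apply Ht, Hi | exact Hd].
  - rewrite <- S_INR. apply (ML_ge v n (1 / INR (S n))); [exact Hn|]. intros i Hi.
    pose proof (values_le_of_covered v n Hcov i Hi). pose proof (Hpos i Hi).
    apply dist_int_div_ge; [lia|]. rewrite Nat.mod_small; lia.
Qed.

Lemma missing_value_paired (n : nat) (v : nat -> nat) :
  (forall i, (i < n)%nat -> (0 < v i)%nat /\ (5 * v i <= 6 * n)%nat) ->
  ML v n < 1 / INR n ->
  forall j, (1 <= j <= n)%nat -> ~ is_value v n j ->
  (n < 2 * j)%nat /\ is_value v n (2 * j) /\ is_value v n (2 * j + 1).
Proof.
  intros Hv Hlt j Hj Hmiss.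
  assert (Hne : forall i, (i < n)%nat -> v i <> j) by (intros i Hi Hvi; apply Hmiss; exists i; auto).
  destruct (ML_lt_witness v n (1 / INR j) _ ltac:(lia) Hlt) as [i1 [Hi1 Hd1]].
  destruct (ML_lt_witness v n ((2 * INR n + 1) / (2 * INR j * INR n)) _ ltac:(lia) Hlt)
    as [i2 [Hi2 Hd2]].
  destruct (ML_lt_witness v n ((2 * INR n - 1) / (2 * INR j * INR n)) _ ltac:(lia) Hlt)
    as [i3 [Hi3 Hd3]].
  destruct (Hv i1 Hi1), (Hv i2 Hi2), (Hv i3 Hi3).
  assert (Hdiv1 : (v i1 mod j = 0)%nat).
  { destruct (Nat.eq_dec (v i1 mod j) 0) as [|Hr]; [assumption|].
    pose proof (dist_int_div_ge n j (v i1) Hj Hr). lra. }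
  destruct (freq_plus_witness n j (v i2)) as (? & ? & ?); auto.
  destruct (freq_minus_witness n j (v i3)) as (? & ?); auto.
  destruct (witnesses_force_pair n j (v i1) (v i2) (v i3)) as (? & Hv1 & Hv3); auto.
  split; [assumption|]. split; [exists i1 | exists i3]; auto.
Qed.

Lemma ML_ge_inv_of_missing (n : nat) (v : nat -> nat) (j0 : nat) :
  (forall i, (i < n)%nat -> (0 < v i)%nat /\ (5 * v i <= 6 * n)%nat) ->
  (1 <= j0 <= n)%nat -> ~ is_value v n j0 ->
  1 / INR n <= ML v n.
Proof.
  intros Hv Hj0 Hmiss0.
  destruct (Rle_or_lt (1 / INR n) (ML v n)) as [Hge|Hlt]; [exact Hge|].
  exfalso. apply (missing_values_not_all_paired v n j0 Hj0 Hmiss0).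
  exact (missing_value_paired n v Hv Hlt).
Qed.

Theorem proposition11p2 (n : nat) (v : nat -> nat) :
  (2 <= n)%nat ->
  (forall i : nat, (i < n)%nat -> (0 < v i)%nat /\ (5 * v i <= 6 * n)%nat) ->
  ML v n = 1 / (INR n + 1) \/
  ML v n = 2 / (2 * INR n + 1) \/
  ML v n >= 1 / INR n.
Proof.
  intros Hn Hv.
  destruct (classic (forall k, (1 <= k <= n)%nat -> is_value v n k)) as [Hcov|Hmiss].
  - left. apply ML_covered; [lia | intros i Hi; apply Hv, Hi | exact Hcov].
  - right; right. apply Rle_ge.
    apply not_all_ex_not in Hmiss as [j0 Hj0]. apply imply_to_and in Hj0 as [Hj0 Hmiss0].
    exact (ML_ge_inv_of_missing n v j0 Hv Hj0 Hmiss0).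
Qed.
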